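(* Let $r=(r_1,\dots,r_n)$ be a permutation of $[n]$, let $f_r(C^{(r_a)},C^{(r_b)})=1$ if $a<b$ and $0$ if $a>b$, and let $E$ be the set of all ordered pairs of distinct classes. For every $\varepsilon>0$ there exists $\mathbf{p}=(p^{(1)},\dots,p^{(n)})\in(0,1)^n$ with $\sum_ip^{(i)}=1$ such that, with $f_u(C^{(i)},C^{(j)})=p^{(i)}/(p^{(i)}+p^{(j)})$, $$\sum_{e\in E}\big(f_r(e)-f_u(e)\big)^2<\varepsilon.$$
   Context: $C^{(1)},\dots,C^{(n)}$ are class labels; $f_r$ are the ranking graph weights and $f_u$ the situational expert graph weights generated by the categorical distribution $\mathbf{p}$. *)

From mathcomp Require Import all_boot all_order all_fingroup all_algebra.
From mathcomp Require Import reals.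
Set Implicit Arguments. Unset Strict Implicit. Unset Printing Implicit Defensive.
Import Order.TTheory GRing.Theory Num.Theory.
Local Open Scope ring_scope.

(* Classes C^(1..n) are indexed by 'I_n.  A ranking r : 'S_n lists the classes
   r_1, ..., r_n; f_r (C^(r a)) (C^(r b)) = 1 if a < b and 0 if a > b. *)
Definition f_r (R : numDomainType) (n : nat) (r : 'S_n) (i j : 'I_n) : R :=
  if ((r^-1)%g i < (r^-1)%g j)%N then 1 else 0.

Definition f_u (R : numFieldType) (n : nat) (p : 'I_n -> R) (i j : 'I_n) : R :=
  p i / (p i + p j).

Definition sq_err (R : numFieldType) (n : nat) (r : 'S_n) (p : 'I_n -> R) : R :=
  \sum_(i < n) \sum_(j < n | j != i) (f_r R r i j - f_u p i j) ^+ 2.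

From mathcomp Require Import all_boot all_order all_fingroup all_algebra.
From mathcomp Require Import reals.
From mathcomp Require Import ring.
Set Implicit Arguments. Unset Strict Implicit. Unset Printing Implicit Defensive.
Import Order.TTheory GRing.Theory Num.Theory.
Local Open Scope ring_scope.

(* Give class C^(r_a) the weight t^a, 0 < t <= 1, and normalize; f_u is
   unchanged by normalization.  For a pair ranked a < b, f_u then differs from
   f_r by at most the weight ratio t^(b-a) <= t, so each of the n(n-1) squared
   errors is at most t.  Taking t = eps / (eps + n(n-1)) makes the total
   smaller than eps. *)

Section BradleyTerry.
Variable R : numFieldType.
Variable n : nat.
Implicit Types (p q : 'I_n -> R) (t : R).

Definition normalize q (i : 'I_n) : R := q i / \sum_k q k.

Definition rank_weight (r : 'S_n) t (i : 'I_n) : R := t ^+ (r^-1)%g i.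

Lemma f_u_normalize q : \sum_k q k != 0 -> f_u (normalize q) =2 f_u q.
Proof.
by move=> S0 i j; rewrite /f_u /normalize -mulrDl invf_div mulrA divfK.
Qed.

Lemma sq_err_normalize (r : 'S_n) q :
  \sum_k q k != 0 -> sq_err r (normalize q) = sq_err r q.
Proof.
move=> S0; apply: eq_bigr => i _; apply: eq_bigr => j _.
by rewrite f_u_normalize.
Qed.

Lemma sum_normalize q : \sum_k q k != 0 -> \sum_i normalize q i = 1.
Proof. by move=> S0; rewrite -mulr_suml divff. Qed.

Lemma sumr_gt0 q :
  (0 < n)%N -> (forall k, 0 < q k) -> 0 < \sum_k q k.
Proof.
move=> n_gt0 q_gt0; rewrite (bigD1 (Ordinal n_gt0)) //= ltr_pwDl //.
by rewrite sumr_ge0 // => k _; rewrite ltW.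
Qed.

Lemma ltr_term_sum q i j :
  (forall k, 0 < q k) -> j != i -> q i < \sum_k q k.
Proof.
move=> q_gt0 ji; rewrite (bigD1 i) //= ltrDl (bigD1 j) //=.
by rewrite ltr_pwDl // sumr_ge0 // => k _; rewrite ltW.
Qed.

Lemma normalize_gt0_lt1 q i :
  (2 <= n)%N -> (forall k, 0 < q k) -> 0 < normalize q i < 1.
Proof.
move=> n_ge2 q_gt0.
have [j ji] : exists j, j \in predC1 i.
  by apply/card_gt0P; rewrite cardC1 card_ord; case: n n_ge2 i.
have lt_qS := ltr_term_sum q_gt0 ji.
have S_gt0 := sumr_gt0 (ltnW n_ge2) q_gt0.
by rewrite divr_gt0 //= ltr_pdivrMr // mul1r.
Qed.

Lemma f_u_compl p i j : p i + p j != 0 -> 1 - f_u p i j = f_u p j i.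
Proof. by move=> pij0; rewrite /f_u [p j + _]addrC; field. Qed.

(* As f_u p i j lies in [0, 1], its square is at most f_u p i j <= p i / p j. *)
Lemma sqr_f_u_le p t i j :
  0 < p i -> 0 < p j -> p i <= t * p j -> f_u p i j ^+ 2 <= t.
Proof.
move=> pi_gt0 pj_gt0 le_pi; rewrite /f_u.
have pij_gt0 : 0 < p i + p j by rewrite addr_gt0.
have fu_ge0 : 0 <= p i / (p i + p j) by rewrite divr_ge0 ?ltW.
have fu_le1 : p i / (p i + p j) <= 1 by rewrite ler_pdivrMr // mul1r lerDl ltW.
have fu_le : p i / (p i + p j) <= p i / p j.
  by rewrite ler_pM2l // lef_pV2 ?posrE // lerDr ltW.
rewrite expr2 (le_trans (ler_piMl fu_ge0 fu_le1)) // (le_trans fu_le) //.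
by rewrite ler_pdivrMr // mulrC.
Qed.

Lemma rank_weight_gt0 (r : 'S_n) t i : 0 < t -> 0 < rank_weight r t i.
Proof. by move=> t_gt0; rewrite exprn_gt0. Qed.

Lemma rank_weight_gap (r : 'S_n) t i j :
  0 < t -> t <= 1 -> ((r^-1)%g i < (r^-1)%g j)%N ->
  rank_weight r t j <= t * rank_weight r t i.
Proof.
move=> t_gt0 t_le1 lt_ij; rewrite /rank_weight -exprS.
by rewrite ler_wiXn2l // ltW.
Qed.

Lemma sqr_f_r_rank_weight_le (r : 'S_n) t i j :
  0 < t -> t <= 1 -> j != i ->
  (f_r R r i j - f_u (rank_weight r t) i j) ^+ 2 <= t.
Proof.
move=> t_gt0 t_le1 ji.
have w_gt0 := rank_weight_gt0 r _ t_gt0.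
rewrite /f_r; case: ltngtP => [lt_ij|lt_ji|/val_inj/perm_inj eq_ij].
- by rewrite f_u_compl ?gt_eqF ?addr_gt0 // sqr_f_u_le // rank_weight_gap.
- by rewrite sub0r sqrrN sqr_f_u_le // rank_weight_gap.
- by rewrite eq_ij eqxx in ji.
Qed.

Lemma sq_err_le (r : 'S_n) p t :
  (forall i j, j != i -> (f_r R r i j - f_u p i j) ^+ 2 <= t) ->
  sq_err r p <= t * (n * n.-1)%:R.
Proof.
move=> err_le; apply: (@le_trans _ _ (\sum_(i < n) \sum_(j in predC1 i) t)).
  by apply: ler_sum => i _; apply: ler_sum => j; apply: err_le.
under eq_bigr do rewrite sumr_const cardC1 card_ord.
by rewrite sumr_const card_ord -mulrnA mulr_natr mulnC.
Qed.

End BradleyTerry.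

Theorem lemma7 (R : realType) (n : nat) (hn : (2 <= n)%N) (r : 'S_n) (eps : R) (heps : 0 < eps) :
  exists p : 'I_n -> R,
    [/\ (forall i, 0 < p i < 1), \sum_(i < n) p i = 1 & sq_err r p < eps].
Proof.
pose N : R := (n * n.-1)%:R.
pose t := eps / (eps + N).
have epsN_gt0 : 0 < eps + N by rewrite ltr_wpDr ?ler0n.
have t_gt0 : 0 < t by rewrite divr_gt0.
have t_le1 : t <= 1 by rewrite ler_pdivrMr // mul1r lerDl ler0n.
have tN_lt : t * N < eps.
  by rewrite mulrAC ltr_pdivrMr // ltr_pM2l // ltrDr.
pose q := rank_weight r t.
have q_gt0 k : 0 < q k by apply: rank_weight_gt0.
have S_neq0 : \sum_k q k != 0 by rewrite gt_eqF // sumr_gt0 // ltnW.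
exists (normalize q); split.
- by move=> i; apply: normalize_gt0_lt1.
- exact: sum_normalize.
rewrite sq_err_normalize //; apply: le_lt_trans tN_lt.
by apply: sq_err_le => i j; apply: sqr_f_r_rank_weight_le.
Qed.
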